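(* Let $(\mathcal{G},\alpha)$ be an abstract GKM graph with vertex set $\mathcal{V}$. Call a subset $F\subseteq H_T^*(\mathcal{G})\setminus\{0\}$ with $fg=0$ for all distinct $f,g\in F$ and $|F|=|\mathcal{V}|$ a maximal collection. Then: (a) $\{\tau_p: p\in\mathcal{V}\}$ is a maximal collection; (b) every maximal collection is of the form $\{c_p\tau_p: p\in\mathcal{V}\}$ with $c_p\in H^*(BT)$; (c) these properties characterize $\{\tau_p\}_{p\in\mathcal{V}}$ up to signs: if $\{g_p\}_{p\in\mathcal{V}}$ is a maximal collection such that every maximal collection is obtained from it by multiplying each $g_p$ by an element of $H^*(BT)$, then $g_p=\pm\tau_p$ for every $p$ (after suitable indexing).
   Context: $H^*(BT)=\mathbb{Z}[x_1,\dots,x_r]$ with $\deg x_i=2$. Let $\mathcal{G}$ be a finite $n$-valent undirected graph (multiple edges allowed, no loops) with vertex set $\mathcal{V}$ and set of directed edges $\mathcal{E}$; for $e\in\mathcal{E}$, $\overline e$ is the reversed edge, $i(e),t(e)$ its initial and terminal vertices, and $\mathcal{E}_p=\{e: i(e)=p\}$. An axial function $\alpha:\mathcal{E}\to H^2(BT)$ satisfies: $\alpha(\overline e)=\pm\alpha(e)$; $\alpha(e),\alpha(e')$ linearly independent over $\mathbb{Z}$ if $e\ne e'$, $i(e)=i(e')$; coefficients of each $\alpha(e)$ have gcd $1$. An abstract GKM graph is such $(\mathcal{G},\alpha)$ admitting a parallel transport, i.e. bijections $\mathcal{P}_e:\mathcal{E}_{i(e)}\to\mathcal{E}_{t(e)}$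 with $\mathcal{P}_{\overline e}=\mathcal{P}_e^{-1}$, $\mathcal{P}_e(e)=\overline e$, $\alpha(\mathcal{P}_e(e'))-\alpha(e')\in\mathbb{Z}\alpha(e)$. Its graph equivariant cohomology is $H_T^*(\mathcal{G})=\{f:\mathcal{V}\to H^*(BT)\ :\ \alpha(e)\mid f(i(e))-f(t(e))\ \forall e\in\mathcal{E}\}$ with pointwise operations. The equivariant Thom class of $p\in\mathcal{V}$ is $\tau_p:\mathcal{V}\to H^*(BT)$, $\tau_p(p)=\prod_{e\in\mathcal{E}_p}\alpha(e)$, $\tau_p(q)=0$ for $q\ne p$; it lies in $H_T^{2n}(\mathcal{G})$. *)

From HB Require Import structures.
From mathcomp Require Import all_boot all_order all_algebra.
From mathcomp Require Import perm mpoly.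
Set Implicit Arguments. Unset Strict Implicit. Unset Printing Implicit Defensive.
Import Order.TTheory GRing.Theory Num.Theory.
Local Open Scope ring_scope.

(* H^*(BT) = Z[x_1, ..., x_r] (each x_i of degree 2). *)
Notation HBT r := {mpoly int[r]}.

(* Elements of H^2(BT) are integral linear forms, encoded by their
   coefficient vectors a : 'rV[int]_r;  lin a = \sum_i a_i x_i. *)
Definition lin (r : nat) (a : 'rV[int]_r) : HBT r :=
  \sum_(i < r) (a 0 i) *: 'X_i.

Definition coef_gcd (r : nat) (a : 'rV[int]_r) : int :=
  \big[gcdz/0%Z]_(i < r) a 0 i.

(* A finite graph: vertices V, directed edges E (both orientations of every
   undirected edge), i(e) = src e, t(e) = tgt e, reversal rev e = \bar e.
   Multiple edges allowed, no loops; n-valent. *)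
Definition nvalent_graph (n : nat) (V E : finType)
    (src tgt : E -> V) (rev : E -> E) : Prop :=
  [/\ forall e, rev (rev e) = e,
      forall e, src (rev e) = tgt e,
      forall e, src e != tgt e &
      forall p : V, #|[pred e | src e == p]| = n].

Definition axial_function (r : nat) (V E : finType)
    (src : E -> V) (rev : E -> E) (alpha : E -> 'rV[int]_r) : Prop :=
  [/\ forall e, alpha (rev e) = alpha e \/ alpha (rev e) = - alpha e,
      forall e e', e != e' -> src e = src e' ->
        forall a b : int, a *: alpha e + b *: alpha e' = 0 -> a = 0 /\ b = 0 &
      forall e, coef_gcd (alpha e) = 1].

(* Existence of a parallel transport: P e restricted to E_{i(e)} is a bijection
   onto E_{t(e)} with inverse P (rev e), P e e = rev e, and
   alpha(P e e') - alpha(e') \in Z alpha(e). *)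
Definition has_parallel_transport (r : nat) (V E : finType)
    (src tgt : E -> V) (rev : E -> E) (alpha : E -> 'rV[int]_r) : Prop :=
  exists P : E -> E -> E,
    [/\ forall e e', src e' = src e -> src (P e e') = tgt e,
        forall e e', src e' = src e -> P (rev e) (P e e') = e',
        forall e, P e e = rev e &
        forall e e', src e' = src e ->
          exists k : int, alpha (P e e') - alpha e' = k *: alpha e].

Definition abstract_GKM_graph (r n : nat) (V E : finType)
    (src tgt : E -> V) (rev : E -> E) (alpha : E -> 'rV[int]_r) : Prop :=
  [/\ nvalent_graph n src tgt rev,
      axial_function src rev alpha &
      has_parallel_transport src tgt rev alpha].

(* Graph equivariant cohomology H_T^*(G): membership predicate on functions
   V -> H^*(BT) (ring operations pointwise). *)
Definition in_HTG (r : nat) (V E : finType) (src tgt : E -> V)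
    (alpha : E -> 'rV[int]_r) (f : V -> HBT r) : Prop :=
  forall e, exists q : HBT r, f (src e) - f (tgt e) = lin (alpha e) * q.

Definition thom (r : nat) (V E : finType) (src : E -> V)
    (alpha : E -> 'rV[int]_r) (p : V) : V -> HBT r :=
  fun q => if q == p then \prod_(e | src e == p) lin (alpha e) else 0.

(* A maximal collection, given as a family {g_p}_{p in V} indexed by V
   (injective, so that the underlying set has exactly |V| elements),
   of nonzero elements of H_T^*(G) with pairwise zero products. *)
Definition maximal_collection (r : nat) (V E : finType) (src tgt : E -> V)
    (alpha : E -> 'rV[int]_r) (g : V -> V -> HBT r) : Prop :=
  [/\ forall p, in_HTG src tgt alpha (g p),
      forall p, g p <> (fun _ => 0),
      injective g &
      forall p q, p != q -> forall v, g p v * g q v = 0].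

From HB Require Import structures.
From mathcomp Require Import all_boot all_order all_algebra.
From mathcomp Require Import perm mpoly.
From Stdlib Require Import FunctionalExtensionality.
Import Order.TTheory GRing.Theory Num.Theory.
Local Open Scope ring_scope.
Set Implicit Arguments. Unset Strict Implicit. Unset Printing Implicit Defensive.

(* A primitive integral linear form is a prime of Z[x_1, ..., x_r]: by the
   Smith normal form a unimodular change of variables turns it into a
   coordinate x_i, which is prime because setting x_i to 0 is a ring morphism
   with kernel (x_i). Linearly independent primitive forms are non-associate.
   Nonzero classes with pairwise zero products have disjoint supports, so the
   |V| members of a maximal collection are each supported at a single vertex
   p, and the GKM condition along the edges at p makes the value at p
   divisible by every alpha(e), e in E_p, hence by their product tau_p(p).
   For (c), tau_p = c g_p' = c c' tau_p'' forces p'' = p and c c' = 1, and the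
   only units of Z[x] are 1 and -1. *)

Section Divisibility.
Variable R : comPzRingType.
Implicit Types a b l h : R.

Definition divides a b := exists q, b = q * a.

(* Only Euclid's property: units are not excluded. *)
Definition prime_elt l :=
  forall a b, divides l (a * b) -> divides l a \/ divides l b.

Lemma divides_sum (I : Type) (s : seq I) (F : I -> R) a :
  (forall i, divides a (F i)) -> divides a (\sum_(i <- s) F i).
Proof.
move=> dF; apply: (big_ind (divides a)) => [|_ _ [x ->] [y ->]|i _].
- by exists 0; rewrite mul0r.
- by exists (x + y); rewrite mulrDl.
- exact: dF.
Qed.

Lemma divides_prod_cancel (T : eqType) (s : seq T) (F : T -> R) l q :
  prime_elt l -> (forall x, x \in s -> ~ divides l (F x)) ->
  divides l ((\prod_(x <- s) F x) * q) -> divides l q.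
Proof.
move=> pl; elim: s => [|x s IH] ndF; first by rewrite big_nil mul1r.
rewrite big_cons -mulrA => /pl [/(ndF x (mem_head _ _)) // |].
by apply: IH => y ys; apply: ndF; rewrite inE ys orbT.
Qed.

Lemma prod_divides (T : eqType) (s : seq T) (F : T -> R) h : uniq s ->
  (forall x, x \in s -> prime_elt (F x)) ->
  {in s &, forall x y, x != y -> ~ divides (F x) (F y)} ->
  (forall x, x \in s -> divides (F x) h) -> divides (\prod_(x <- s) F x) h.
Proof.
elim: s => [|x s IH] /=; first by move=> *; exists h; rewrite big_nil mulr1.
case/andP=> xNs us pF ndF dh.
have sub_s y : y \in s -> y \in x :: s by rewrite inE => ->; rewrite orbT.
have [q hq] : divides (\prod_(y <- s) F y) h.
  apply: IH => // [y ys | y z ys zs | y ys]; first exact/pF/sub_s.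
    exact: ndF (sub_s y ys) (sub_s z zs).
  exact/dh/sub_s.
have [q' hq'] : divides (F x) q.
  apply: (divides_prod_cancel (s := s) (F := F)); first exact/pF/mem_head.
    move=> y ys; apply: ndF; rewrite ?mem_head ?sub_s //.
    by apply: contraNneq xNs => ->.
  by rewrite mulrC -hq; exact/dh/mem_head.
by exists q'; rewrite big_cons hq hq' mulrA.
Qed.

End Divisibility.

Lemma divides_rmorph (R S : comPzRingType) (f : {rmorphism R -> S}) (a b : R) :
  divides a b -> divides (f a) (f b).
Proof. by case=> q ->; exists (f q); rewrite rmorphM. Qed.

Lemma prime_elt_rmorph (R S : comPzRingType) (f : {rmorphism R -> S})
    (g : {rmorphism S -> R}) (l : R) :
  cancel f g -> prime_elt (f l) -> prime_elt l.
Proof.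
move=> fK pfl a b /(divides_rmorph f); rewrite rmorphM => /pfl.
by case=> /(divides_rmorph g); rewrite !fK; [left | right].
Qed.

Section LinearForms.
Variable r : nat.
Implicit Types (i k : 'I_r) (a b : 'rV[int]_r) (M N : 'M[int]_r) (p : HBT r).

Lemma lin_coef a k : (lin a)@_U_(k) = a 0 k.
Proof.
rewrite /lin raddf_sum /= (bigD1 k) //= mcoeffZ mcoeffXU eqxx mulr1.
by rewrite big1 ?addr0 // => i ik; rewrite mcoeffZ mcoeffXU (negbTE ik) mulr0.
Qed.

Lemma linN a : lin (- a) = - lin a.
Proof. by rewrite /lin -sumrN; apply: eq_bigr => i _; rewrite mxE scaleNr. Qed.

Lemma lin_delta i : lin (delta_mx 0 i) = 'X_i.
Proof.
rewrite /lin (bigD1 i) //= big1 ?addr0 => [|j ji]; first by rewrite mxE !eqxx scale1r.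
by rewrite mxE (negbTE ji) andbF scale0r.
Qed.

Lemma lin_eq0 a : lin a = 0 -> a = 0.
Proof. by move=> a0; apply/rowP => k; rewrite -lin_coef a0 mcoeff0 mxE. Qed.

Lemma lin_primitive_neq0 a : coef_gcd a = 1 -> lin a != 0.
Proof.
move=> a_prim; apply/eqP => /lin_eq0 a0.
have : coef_gcd a = 0.
  by apply: (big_ind (fun x : int => x = 0)) => // [x y -> -> | i _]; rewrite ?a0 ?mxE.
by rewrite a_prim.
Qed.

Definition lin_subst M : r.-tuple (HBT r) := [tuple lin (row i M) | i < r].

Lemma lin_mPo_subst M a : lin a \mPo lin_subst M = lin (a *m M).
Proof.
rewrite /lin raddf_sum /=.
under eq_bigr => i _ do
  rewrite comp_mpolyZ comp_mpolyXU -(tnth_nth 0) tnth_map tnth_ord_tuple scaler_sumr.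
rewrite exchange_big; apply: eq_bigr => k _; rewrite !mxE scaler_suml.
by apply: eq_bigr => j _; rewrite !mxE scalerA.
Qed.

Lemma mPo_lin_substM M N p :
  (p \mPo lin_subst M) \mPo lin_subst N = p \mPo lin_subst (M *m N).
Proof.
rewrite [p \mPo lin_subst M]comp_mpolyE [p \mPo lin_subst (M *m N)]comp_mpolyE.
rewrite raddf_sum /=; apply: eq_bigr => m _; rewrite comp_mpolyZ rmorph_prod /=.
congr (_ *: _); apply: eq_bigr => i _.
by rewrite rmorphXn /= !tnth_map !tnth_ord_tuple lin_mPo_subst row_mul.
Qed.

Lemma mPo_lin_subst1 p : p \mPo lin_subst 1%:M = p.
Proof.
suff -> : lin_subst 1%:M = [tuple 'X_i | i < r] by exact: comp_mpoly_id.
apply: eq_from_tnth => i; rewrite !tnth_map !tnth_ord_tuple -lin_delta.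
by congr lin; apply/rowP => j; rewrite !mxE eq_sym.
Qed.

Lemma mPo_lin_substK M : M \in unitmx ->
  cancel (comp_mpoly (lin_subst M)) (comp_mpoly (lin_subst (invmx M))).
Proof. by move=> M_unit p; rewrite mPo_lin_substM mulmxV // mPo_lin_subst1. Qed.

Definition kill_var i : r.-tuple (HBT r) :=
  [tuple if j == i then 0 else 'X_j | j < r].

Lemma kill_varX i : 'X_i \mPo kill_var i = 0.
Proof. by rewrite comp_mpolyXU -(tnth_nth 0) tnth_map tnth_ord_tuple eqxx. Qed.

Lemma lin_mPo_kill_var i a :
  lin a \mPo kill_var i = lin (a - a 0 i *: delta_mx 0 i).
Proof.
rewrite /lin raddf_sum /=; apply: eq_bigr => j _.
rewrite comp_mpolyZ comp_mpolyXU -(tnth_nth 0) tnth_map tnth_ord_tuple !mxE.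
by case: eqP => [->|_]; rewrite ?scaler0 ?eqxx ?mulr1 ?subrr ?scale0r ?mulr0 ?subr0.
Qed.

(* Termwise, [X^m - X^m(x_i := 0)] is [0] or [X^m]; in the latter case
   [x_i] occurs in [X^m]. *)
Lemma divides_X_kill_var i p : p \mPo kill_var i = 0 -> divides 'X_i p.
Proof.
move=> p0; suff : divides 'X_i (p - (p \mPo kill_var i)) by rewrite p0 subr0.
rewrite {1}[p]mpolyE comp_mpolyEX -sumrB; apply: divides_sum => m.
rewrite -scalerBr; suff [q ->] : divides 'X_i ('X_[m] - ('X_[m] \mPo kill_var i)).
  by exists (p@_m *: q); rewrite scalerAl.
rewrite comp_mpolyX (mpolyXE_id _ m) (bigD1 i) //= [X in _ - X](bigD1 i) //=.
rewrite tnth_map tnth_ord_tuple eqxx.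
under [X in _ - _ * X]eq_bigr => j ji do rewrite tnth_map tnth_ord_tuple (negbTE ji).
case: (m i) => [|k]; first by rewrite !expr0 !mul1r subrr; exists 0; rewrite mul0r.
by rewrite expr0n /= mul0r subr0 exprS -mulrA mulrC; eexists.
Qed.

Lemma prime_X i : prime_elt ('X_i : HBT r).
Proof.
move=> a b [q /(congr1 (comp_mpoly (kill_var i)))].
rewrite !rmorphM /= kill_varX mulr0 => /eqP; rewrite mulf_eq0.
by case/orP=> /eqP/divides_X_kill_var; [left | right].
Qed.

Lemma divides_X_lin i a : divides 'X_i (lin a) -> a = a 0 i *: delta_mx 0 i.
Proof.
case=> q /(congr1 (comp_mpoly (kill_var i))).
rewrite rmorphM /= kill_varX mulr0 lin_mPo_kill_var => /lin_eq0/eqP.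
by rewrite subr_eq0 => /eqP.
Qed.

Lemma primitive_normal_form a : coef_gcd a = 1 ->
  exists2 M, M \in unitmx & exists i, a *m M = delta_mx 0 i.
Proof.
move=> a_prim.
have r_gt0 : (0 < r)%N.
  move: a_prim; rewrite /coef_gcd.
  case: (pickP (fun _ : 'I_r => true)) => [i _ _ | none]; last by rewrite big_pred0.
  exact: leq_ltn_trans (leq0n i) (ltn_ord i).
pose z := Ordinal r_gt0.
(* [a = L D R0] with [D] a single row, so [a R0^-1] is a multiple of [e_0]. *)
have [L _ [R0 R0_unit [d _ aE]]] := int_Smith_normal_form a.
set u := L 0 0 * d`_0.
have aR0 : a *m invmx R0 = u *: delta_mx 0 z.
  rewrite aE mulmxK //; apply/rowP => k; rewrite !mxE big_ord1 !mxE eqxx /=.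
  have -> : (0%N == k :> nat) = (k == z) by rewrite eq_sym -val_eqE.
  by case: (k == z); rewrite ?mulr1n ?mulr0n ?mulr1 ?mulr0.
have u_dvd j : (u %| a 0%R j)%Z.
  have -> : a = u *: row z R0 by rewrite rowE scalemxAl -aR0 mulmxKV.
  by rewrite mxE dvdz_mulr.
have u2 : u * u = 1.
  have : (u %| coef_gcd a)%Z.
    apply: (big_ind (fun x => (u %| x)%Z)) => // x y ux uy.
    by rewrite dvdz_gcd ux uy.
  rewrite a_prim dvdz1 => /eqP u1.
  by rewrite -expr2 -real_normK ?num_real // -abszE u1 expr1n.
exists (u *: invmx R0).
  by rewrite unitmxZ ?unitmx_inv //; apply/unitrP; exists u.
by exists z; rewrite -scalemxAr aR0 scalerA u2 scale1r.
Qed.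

Lemma prime_lin a : coef_gcd a = 1 -> prime_elt (lin a).
Proof.
move=> /primitive_normal_form [M M_unit [i aM]].
apply: (prime_elt_rmorph (mPo_lin_substK M_unit)).
by rewrite /= lin_mPo_subst aM lin_delta; exact: prime_X.
Qed.

Lemma lin_ndivides a b : coef_gcd a = 1 ->
    (forall c d : int, c *: a + d *: b = 0 -> c = 0 /\ d = 0) ->
  ~ divides (lin a) (lin b).
Proof.
move=> /primitive_normal_form [M M_unit [i aM]] indep.
move=> /(divides_rmorph (comp_mpoly (lin_subst M))) /=.
rewrite !lin_mPo_subst aM lin_delta => /divides_X_lin.
set t := (b *m M) 0 i => bM.
have ba : b = t *: a.
  by apply: (can_inj (mulmxK M_unit)); rewrite /= -scalemxAl aM.
have := indep t (-1); rewrite scaleN1r ba subrr => /(_ erefl) [_ /eqP].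
by rewrite oppr_eq0 oner_eq0.
Qed.

Lemma mpoly_int_unit (u v : HBT r) : u * v = 1 -> v = 1 \/ v = -1.
Proof.
move/mpoly_intro_unit => /andP [/eqP vE /unitrP [w [/intUnitRing.unitzPl v0_unit _]]].
move: v0_unit; rewrite qualifE => /orP [] /eqP v0; rewrite vE v0; [left | right].
- exact: rmorph1.
- exact: rmorphN1.
Qed.

End LinearForms.

Lemma disjoint_supports_perm (V : finType) (R : idomainType) (f : V -> V -> R) :
    (forall p, exists v, f p v != 0) ->
    (forall p q, p != q -> forall v, f p v * f q v = 0) ->
  exists s : {perm V}, forall p v, f p v != 0 -> v = s p.
Proof.
move=> f_neq0 f_orth; pose s0 p := xchoose (f_neq0 p).
have s0P p : f p (s0 p) != 0 := xchooseP (f_neq0 p).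
have supp_uniq p q v : f p v != 0 -> f q v != 0 -> p = q.
  move=> fp fq; have [// | pq] := eqVneq p q.
  by have /eqP := f_orth p q pq v; rewrite mulf_eq0 (negbTE fp) (negbTE fq).
have s0_inj : injective s0 by move=> p q spq; apply: (supp_uniq _ _ (s0 p)); rewrite // spq.
exists (perm s0_inj) => p v fpv; have := s0P ((perm s0_inj)^-1 v)%g.
rewrite -[s0 _](permE s0_inj) permKV => /(supp_uniq _ _ _ fpv) ->.
by rewrite permKV.
Qed.

Section ThomClasses.
Variables (r : nat) (V E : finType) (src tgt : E -> V) (rev : E -> E).
Variable alpha : E -> 'rV[int]_r.
Hypothesis src_rev : forall e, src (rev e) = tgt e.
Hypothesis no_loop : forall e, src e != tgt e.
Hypothesis alpha_rev : forall e, alpha (rev e) = alpha e \/ alpha (rev e) = - alpha e.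
Hypothesis alpha_indep : forall e e', e != e' -> src e = src e' ->
  forall a b : int, a *: alpha e + b *: alpha e' = 0 -> a = 0 /\ b = 0.
Hypothesis alpha_prim : forall e, coef_gcd (alpha e) = 1.

Local Notation tau := (thom src alpha).
Local Notation HTG := (in_HTG src tgt alpha).
Local Notation maximal := (maximal_collection src tgt alpha).

Lemma thom_diag p : tau p p = \prod_(e | src e == p) lin (alpha e).
Proof. by rewrite /thom eqxx. Qed.

Lemma thom_off p q : q != p -> tau p q = 0.
Proof. by move=> /negbTE qp; rewrite /thom qp. Qed.

Lemma thom_diag_neq0 p : tau p p != 0.
Proof. by rewrite thom_diag; apply/prodf_neq0 => e _; exact: lin_primitive_neq0. Qed.

Lemma thom_in_HTG p : HTG (tau p).
Proof.
move=> e; pose rest e0 := \prod_(e' | (src e' == p) && (e' != e0)) lin (alpha e').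
have [se | sNe] := eqVneq (src e) p.
  have tNe : tgt e != p by rewrite -se eq_sym no_loop.
  exists (rest e); rewrite (thom_off tNe) subr0 se thom_diag (bigD1 e) ?se //= mulrC.
have [te | tNe] := eqVneq (tgt e) p; last by exists 0; rewrite !thom_off ?subrr ?mulr0.
have rev_e : src (rev e) == p by rewrite src_rev te.
rewrite (thom_off sNe) sub0r te thom_diag (bigD1 (rev e)) //= -/(rest (rev e)).
case: (alpha_rev e) => ->; first by exists (- rest (rev e)); rewrite mulrN mulrC.
by exists (rest (rev e)); rewrite linN mulNr opprK mulrC.
Qed.

Lemma thom_maximal : maximal tau.
Proof.
split => [p | p tau0 | p q /(congr1 (fun f => f p)) tpq | p q pq v].
- exact: thom_in_HTG.
- by have /eqP := thom_diag_neq0 p; rewrite tau0.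
- have [// | pq] := eqVneq p q; have := thom_diag_neq0 p.
  by rewrite tpq thom_off ?eqxx // eq_sym.
- have [-> | vp] := eqVneq v p; last by rewrite [tau p v]thom_off ?mul0r.
  by rewrite [tau q p]thom_off ?mulr0 // eq_sym.
Qed.

Lemma maximal_collection_supp_perm f : maximal f ->
  exists s : {perm V}, forall p v, v != s p -> f p v = 0.
Proof.
case=> _ f_neq0 _ f_orth.
have f_ex p : exists v, f p v != 0.
  case: (pickP (fun v => f p v != 0)) => [v fv | f0]; first by exists v.
  by case: (f_neq0 p); apply: functional_extensionality => v; apply/eqP/negbFE/f0.
have [s f_supp] := disjoint_supports_perm f_ex f_orth.
by exists s => p v vs; apply/eqP; apply: contraNT vs => /f_supp ->.
Qed.

Lemma thom_divides_supported f v : HTG f -> (forall w, w != v -> f w = 0) ->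
  divides (tau v v) (f v).
Proof.
move=> fH f_supp; rewrite thom_diag -big_filter; apply: prod_divides.
- by rewrite filter_uniq // index_enum_uniq.
- by move=> e _; exact: prime_lin.
- move=> e e'; rewrite !mem_filter => /andP [/eqP se _] /andP [/eqP se' _] ee'.
  by apply: lin_ndivides => //; apply: alpha_indep; rewrite ?se ?se'.
- move=> e; rewrite mem_filter => /andP [/eqP se _].
  have [q fe] := fH e; exists q; rewrite mulrC -fe -se (f_supp (tgt e)) ?subr0 //.
  by rewrite -se eq_sym no_loop.
Qed.

Lemma maximal_thom_multiple f : maximal f ->
  exists (c : V -> HBT r) (s : {perm V}),
    forall p, f p = (fun v => c (s p) * tau (s p) v).
Proof.
move=> f_max; have [s f_supp] := maximal_collection_supp_perm f_max.
have f_dvd v : exists c, f (s^-1 v)%g v == c * tau v v.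
  have [c fc] : divides (tau v v) (f (s^-1 v)%g v).
    apply: thom_divides_supported; first by case: f_max.
    by move=> w wv; apply: f_supp; rewrite permKV.
  by exists c; rewrite fc.
pose c v := xchoose (f_dvd v).
have cE v : f (s^-1 v)%g v = c v * tau v v := eqP (xchooseP (f_dvd v)).
exists c, s => p; apply: functional_extensionality => w.
have [-> | ws] := eqVneq w (s p); last by rewrite f_supp // thom_off ?mulr0.
by rewrite -cE permK.
Qed.

Lemma thom_scaled_eq p v c : (forall w, tau p w = c * tau v w) -> v = p /\ c = 1.
Proof.
have [-> | vp] := eqVneq v p => tpE.
  by split=> //; apply: (mulIf (thom_diag_neq0 p)); rewrite mul1r -tpE.
by have := thom_diag_neq0 p; rewrite tpE thom_off ?mulr0 ?eqxx // eq_sym.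
Qed.

Lemma thom_characterization g : maximal g ->
    (forall f, maximal f -> exists (c : V -> HBT r) (s : {perm V}),
       forall p, f p = (fun v => c (s p) * g (s p) v)) ->
  exists s : {perm V}, forall p, g p = tau (s p) \/ g p = (fun v => - tau (s p) v).
Proof.
move=> g_max g_univ.
have [c' [s' gE]] := maximal_thom_multiple g_max.
have [c [s tauE]] := g_univ _ thom_maximal.
exists s' => q; rewrite -(permKV s q); move: (s^-1 q)%g => p.
have [s's cc'] : s' (s p) = p /\ c (s p) * c' (s' (s p)) = 1.
  by apply: thom_scaled_eq => w; rewrite [tau p]tauE gE /= mulrA.
rewrite s's in cc'; rewrite gE s's.
case/mpoly_int_unit: cc' => ->; [left | right]; apply: functional_extensionality => v.
- by rewrite mul1r.
- by rewrite mulN1r.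
Qed.

End ThomClasses.

Theorem proposition3p3 (r n : nat) (V E : finType)
    (src tgt : E -> V) (rev : E -> E) (alpha : E -> 'rV[int]_r)
    (HG : abstract_GKM_graph n src tgt rev alpha) :
  (* (a) the Thom classes form a maximal collection *)
  maximal_collection src tgt alpha (thom src alpha)
  (* (b) every maximal collection is {c_p tau_p : p in V} *)
  /\ (forall f : V -> V -> {mpoly int[r]},
        maximal_collection src tgt alpha f ->
        exists (c : V -> {mpoly int[r]}) (s : {perm V}),
          forall p, f p = (fun v => c (s p) * thom src alpha (s p) v))
  (* (c) characterization up to sign and reindexing *)
  /\ (forall g : V -> V -> {mpoly int[r]},
        maximal_collection src tgt alpha g ->
        (forall f : V -> V -> {mpoly int[r]},
           maximal_collection src tgt alpha f ->
           exists (c : V -> {mpoly int[r]}) (s : {perm V}),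
             forall p, f p = (fun v => c (s p) * g (s p) v)) ->
        exists s : {perm V}, forall p,
          g p = thom src alpha (s p) \/
          g p = (fun v => - thom src alpha (s p) v)).
Proof.
case: HG => -[_ src_rev no_loop _] [alpha_rev alpha_indep alpha_prim] _.
split; first exact: thom_maximal.
split; first by move=> f; exact: maximal_thom_multiple.
by move=> g; exact: thom_characterization.
Qed.
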